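(* The expected number of rows of the (unshifted) Ferrers diagram underlying a uniformly random type-B permutation tableau of size $n$, i.e. the expected number of south steps on its boundary, equals $\dfrac{n+1}{4}$.
   Context: A Ferrers diagram is a left-justified array of cells whose row lengths weakly decrease from top to bottom (rows of length $0$ are allowed). Its half-perimeter is the number of rows plus the number of columns. Its southeast boundary, traversed from the northeast corner to the southwest corner, consists of $n$ unit steps, each south or west; south steps correspond to rows and west steps to columns. If the diagram has $c$ columns, the shifted Ferrers diagram is obtained by inserting $c$ new left-justified rows above it, of lengths $c,c-1,\dots,1$ from top to bottom; the rightmost cell of each inserted row is a diagonal cell. A type-B permutation tableau of size $n$ is a filling of a shifted Ferrers diagram of half-perimeter $n$ with $0$'s and $1$'s such that: (1) every column contains at least one $1$; (2) no $0$ has both a $1$ above it in its column and a $1$ to its left in its row; (3) if a diagonal cell contains $0$ then every cell of its row contains $0$. Only the rows of the original (unshifted) Ferrers diagram are counted, not the inserted rows. Let $\mathcal{B}_n$ be the set of such tableaux with the uniform probability measure $\mathbb{P}_n$ and expectation $\mathbb{E}_n$. *)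

From mathcomp Require Import all_boot all_order all_algebra.
Set Implicit Arguments. Unset Strict Implicit. Unset Printing Implicit Defensive.
Import GRing.Theory Num.Theory.

(* Encoding of type-B permutation tableaux of size n.
   - The southeast boundary of the (unshifted) Ferrers diagram, read from the
     NE corner to the SW corner, is a word w of n letters:
     true = south step (a row), false = west step (a column).
   - Columns are indexed 0..c-1 from left to right, where c = ncols w.
   - The shifted diagram has n = c + (#rows) rows, indexed 0..n-1 from top to
     bottom: rows 0..c-1 are the inserted (staircase) rows, row r < c having
     length r+1 and its rightmost cell (r, r) as diagonal cell; row c+i is the
     i-th row (from the top) of the original diagram, whose length is the
     number of west steps after the corresponding south step.
   - A filling is a 0/1 function on the n x n grid, required to vanish
     outside the shifted diagram (true = 1, false = 0). *)

Definition ncols (w : seq bool) : nat := count negb w.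

Definition nrows (w : seq bool) : nat := count id w.

Definition orig_lens (w : seq bool) : seq nat :=
  [seq count negb (drop i.+1 w) | i <- iota 0 (size w) & nth false w i].

Definition rowlen (w : seq bool) (r : nat) : nat :=
  if r < ncols w then r.+1 else nth 0 (orig_lens w) (r - ncols w).

Definition in_shape (w : seq bool) (r j : nat) : bool := j < rowlen w r.

Definition tableau (n : nat) : finType :=
  (n.-tuple bool * {ffun 'I_n * 'I_n -> bool})%type.

Definition is_typeB (n : nat) (t : tableau n) : bool :=
  let w := val t.1 in
  let f := t.2 in
  [&&
      [forall r : 'I_n, forall j : 'I_n, f (r, j) ==> in_shape w r j],
      [forall j : 'I_n, (j < ncols w) ==> [exists r : 'I_n, f (r, j)]],
      [forall r : 'I_n, forall j : 'I_n,
         (in_shape w r j && ~~ f (r, j)) ==>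
         ~~ ([exists r' : 'I_n, (r' < r) && f (r', j)] &&
             [exists j' : 'I_n, (j' < j) && f (r, j')])] &
      [forall r : 'I_n, ((r < ncols w) && ~~ f (r, r)) ==>
                        [forall j : 'I_n, ~~ f (r, j)]]].

Definition typeB_tableaux (n : nat) : {set tableau n} := [set t | is_typeB t].

Definition expected_rows (n : nat) : rat :=
  (\sum_(t in typeB_tableaux n) (nrows (val t.1))%:R) / (#|typeB_tableaux n|)%:R.

From Stdlib Require Import FunctionalExtensionality.
From mathcomp Require Import all_boot all_order all_algebra.
From mathcomp Require Import zify ring.
Import GRing.Theory Num.Theory.
Set Implicit Arguments. Unset Strict Implicit. Unset Printing Implicit Defensive.

(* A tableau of size n+1 is obtained from one of size n by appending a last
   boundary step.  A south step adds an empty bottom row and leaves the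
   filling unchanged.  A west step adds a new leftmost column v (its top cell
   is a new diagonal cell, the old filling moves one step south-east); the
   result is of type B iff v contains a 1 and every 1 of v below the top lies
   in a "free" row of the old tableau.  Tracking the number u of free rows:
   a south step gives u+1 free rows, and summing y^(free rows) over all west
   extensions gives 2y(1+y)^u - y^(u+1).  Hence the generating functions
     F_n(y) = sum_(t in B_n) y^(free rows t),
     D_n(y) = sum_(t in B_n) rows(t) y^(free rows t)
   satisfy F_(n+1)(y) = 2y F_n(1+y) and D_(n+1)(y) = 2y D_n(1+y) + y F_n(y).
   By induction, (y+n) F_n(y) = y F_n(1+y) and
   4(y+n-1) D_n(y) = n(2y+n-1) F_n(y); at y = 1 this is 4 D_n(1) = (n+1) F_n(1),
   i.e. E_n[rows] = D_n(1)/F_n(1) = (n+1)/4. *)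

Lemma ncols_rcons w a : ncols (rcons w a) = ncols w + ~~ a.
Proof. by rewrite /ncols -cats1 count_cat /= addn0. Qed.

Lemma nrows_rcons w a : nrows (rcons w a) = nrows w + a.
Proof. by rewrite /nrows -cats1 count_cat /= addn0. Qed.

Lemma size_ncols_nrows w : size w = ncols w + nrows w.
Proof. by rewrite /ncols /nrows addnC -(count_predC id). Qed.

Lemma size_orig_lens w : size (orig_lens w) = nrows w.
Proof.
rewrite /orig_lens size_map size_filter /nrows.
by rewrite -[in RHS](mkseq_nth false w) /mkseq count_map.
Qed.

(* A south step adds a bottom row of length 0; a west step adds a new
   leftmost column, lengthening every existing row by one. *)
Lemma orig_lens_rcons w a : orig_lens (rcons w a) =
  if a then rcons (orig_lens w) 0 else map succn (orig_lens w).
Proof.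
rewrite /orig_lens size_rcons -addn1 iotaD add0n /= filter_cat /= nth_rcons ltnn eqxx.
set L := [seq i <- iota 0 (size w) | nth false w i].
have -> : [seq i <- iota 0 (size w) | nth false (rcons w a) i] = L.
  by apply: eq_in_filter => i; rewrite mem_iota => /andP[_ hi]; rewrite nth_rcons hi.
rewrite map_cat.
have -> : [seq count negb (drop i.+1 (rcons w a)) | i <- L] =
          [seq count negb (drop i.+1 w) + ~~ a | i <- L].
  apply/eq_in_map => i; rewrite mem_filter mem_iota => /and3P[_ _ hi].
  by rewrite drop_rcons // -cats1 count_cat /= addn0.
case: a => /=; last by rewrite cats0 -map_comp; apply/eq_map => i /=; rewrite addn1.
rewrite -[rcons _ 0]cats1; congr (_ ++ _); first by apply/eq_map => i; rewrite addn0.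
by rewrite drop_oversize // size_rcons.
Qed.

Lemma ncols_le_size w : ncols w <= size w.
Proof. by rewrite size_ncols_nrows leq_addr. Qed.

Lemma rowlen_le_ncols w r : rowlen w r <= ncols w.
Proof.
rewrite /rowlen; case: ifP => // _.
case: (ltnP (r - ncols w) (size (orig_lens w))) => h; last by rewrite nth_default.
move: (mem_nth 0 h); rewrite /orig_lens => /mapP[i _ ->].
by rewrite /ncols -{2}(cat_take_drop i.+1 w) count_cat leq_addl.
Qed.

Lemma rowlen_out w r : size w <= r -> rowlen w r = 0.
Proof.
move=> h; rewrite /rowlen size_ncols_nrows in h *; case: ifP => [h2|_]; first lia.
by rewrite nth_default // size_orig_lens; lia.
Qed.

Lemma in_shape_row w r j : in_shape w r j -> r < size w.
Proof. rewrite /in_shape => h; case: (ltnP r (size w)) => // /rowlen_out; lia. Qed.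

Lemma in_shape_col w r j : in_shape w r j -> j < ncols w.
Proof. rewrite /in_shape => h; have := rowlen_le_ncols w r; lia. Qed.

Lemma in_shape_south w : in_shape (rcons w true) =2 in_shape w.
Proof.
move=> r j; rewrite /in_shape /rowlen ncols_rcons addn0 orig_lens_rcons.
case: ifP => // h; rewrite nth_rcons size_orig_lens.
case: ifP => // h2; rewrite if_same nth_default // size_orig_lens; lia.
Qed.

(* After a west step, row 0 of the shifted diagram is the new one-cell
   staircase row, and old cell (r, j) becomes cell (r+1, j+1). *)
Lemma rowlen_west_top w : rowlen (rcons w false) 0 = 1.
Proof. by rewrite /rowlen ncols_rcons addn1. Qed.

Lemma rowlen_west_shift w r :
  rowlen (rcons w false) r.+1 = if r < size w then (rowlen w r).+1 else 0.
Proof.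
case: (ltnP r (size w)) => hr; last by rewrite rowlen_out // size_rcons.
rewrite /rowlen ncols_rcons addn1 ltnS orig_lens_rcons; case: ifP => // h.
rewrite subSS (nth_map 0) // size_orig_lens; move: hr; rewrite size_ncols_nrows; lia.
Qed.

Lemma in_shape_west w r j : in_shape (rcons w false) r j =
  match r, j with
  | 0, 0 => true
  | 0, _.+1 => false
  | r'.+1, 0 => r' < size w
  | r'.+1, j'.+1 => in_shape w r' j'
  end.
Proof.
rewrite /in_shape; case: r => [|r]; first by case: j => [|j]; rewrite rowlen_west_top.
rewrite rowlen_west_shift; case: (ltnP r (size w)) => hr; case: j => [|j] //.
by rewrite rowlen_out.
Qed.

(* This form is
   independent of the size bound n and suited to induction on w. *)
Definition typeB_fill (w : seq bool) (g : nat -> nat -> bool) : Prop :=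
 [/\ (forall r j, g r j -> in_shape w r j),
     (forall j, j < ncols w -> exists r, g r j),
     (forall r j r' j', in_shape w r j -> ~~ g r j -> r' < r -> g r' j ->
          j' < j -> g r j' -> False) &
     (forall r j, r < ncols w -> ~~ g r r -> ~~ g r j)].

(* Row r is free when a 1 may be put to the left of it: its diagonal cell
   (if any) holds a 1 and no 0 of the row has a 1 above it. *)
Definition free_row w (g : nat -> nat -> bool) r : Prop :=
  (r < ncols w -> g r r) /\
  (forall j k, in_shape w r j -> ~~ g r j -> k < r -> ~~ g k j).

Definition free_rowb w (g : nat -> nat -> bool) r : bool :=
  ((r < ncols w) ==> g r r) &&
  all (fun j => in_shape w r j ==> (g r j || ~~ has (fun k => g k j) (iota 0 r)))
      (iota 0 (ncols w)).

Lemma free_rowP w g r : reflect (free_row w g r) (free_rowb w g r).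
Proof.
apply: (iffP andP) => [[/implyP h1 /allP h2]|[h1 h2]]; split => //.
- move=> j k hs hg hk; have := h2 j; rewrite mem_iota add0n (in_shape_col hs).
  move=> /(_ isT); rewrite hs (negbTE hg) /= => /hasPn; apply; by rewrite mem_iota.
- by apply/implyP.
- apply/allP => j _; apply/implyP => hs; case hg: (g r j) => //=.
  by apply/hasPn => k; rewrite mem_iota add0n => /andP[_ hk]; apply: h2; rewrite ?hg.
Qed.

Definition add_column (g : nat -> nat -> bool) (v : nat -> bool) r j : bool :=
  if j is j'.+1 then (if r is r'.+1 then g r' j' else false) else v r.

Lemma typeB_fill_west w g (v : nat -> bool) : (forall r, v r -> r <= size w) ->
  typeB_fill (rcons w false) (add_column g v) <->
  [/\ typeB_fill w g, (exists r, v r) & forall r, v r.+1 -> free_row w g r].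
Proof.
have ncolsW : ncols (rcons w false) = (ncols w).+1 by rewrite ncols_rcons addn1.
move=> hv; split.
  case=> H0 H1 H2 H3; split.
  - split.
    + by move=> r j h; have := H0 r.+1 j.+1 h; rewrite in_shape_west.
    + move=> j hj; case: (H1 j.+1); first by rewrite ncolsW.
      by case=> [|r] //= h; exists r.
    + move=> r j r' j' hs hg hr' hg' hj' hgj'.
      by apply: (H2 r.+1 j.+1 r'.+1 j'.+1); rewrite ?in_shape_west.
    + by move=> r j hr hg; apply: (H3 r.+1 j.+1); rewrite ?ncolsW.
  - by case: (H1 0); [rewrite ncolsW|move=> r h; exists r].
  - move=> r hvr; split.
      move=> hr; apply/negPn/negP => hg.
      by move: (H3 r.+1 0); rewrite ncolsW ltnS => /(_ hr hg); rewrite /= hvr.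
    move=> j k hs hg hk; apply/negP => hgk.
    by apply: (H2 r.+1 j.+1 k.+1 0); rewrite ?in_shape_west.
case=> [[G0 G1 G2 G3] [r0 hr0] F]; split.
- move=> [|r] [|j] //= h; rewrite in_shape_west //; [exact: hv | exact: G0].
- move=> [|j] hj; first by exists r0.
  by case: (G1 j); [rewrite -ltnS -ncolsW | move=> r h; exists r.+1].
- move=> [|r] [|j] // r'; rewrite in_shape_west /= => j' hs hg.
  case: r' => [|r'] // hr' hg'; case: j' => [|j'] hj' hgj'.
    by case: (F r hgj') => _ /(_ j r' hs hg hr'); rewrite hg'.
  exact: (G2 r j r' j').
- move=> [|r] [|j] //=; rewrite ncolsW ltnS => hr hg; last exact: G3.
  apply/negP => hv1; case: (F r hv1) => h1 _; by rewrite h1 in hg.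
Qed.

Lemma typeB_fill_south w g : typeB_fill (rcons w true) g <-> typeB_fill w g.
Proof.
rewrite /typeB_fill ncols_rcons addn0.
have E := in_shape_south w.
split; case=> H0 H1 H2 H3; split => //.
- by move=> r j /H0; rewrite E.
- by move=> r j r' j'; rewrite -E; apply: H2.
- by move=> r j /H0; rewrite E.
- by move=> r j r' j'; rewrite E; apply: H2.
Qed.

Lemma free_row_west_top w g v : free_rowb (rcons w false) (add_column g v) 0 = v 0.
Proof.
apply/free_rowP/idP => [[h _]|h]; first by apply: h; rewrite ncols_rcons addn1.
by split => // j k _ _.
Qed.

Lemma free_row_west_shift w g v r : r < size w ->
  free_rowb (rcons w false) (add_column g v) r.+1 =
  free_rowb w g r && (v r.+1 || ~~ has v (iota 0 r.+1)).
Proof.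
move=> hr; apply/free_rowP/andP.
  case=> h1 h2; split.
    apply/free_rowP; split.
      by move=> hc; apply: h1; rewrite ncols_rcons addn1.
    by move=> j k hs hg hk; apply: (h2 j.+1 k.+1); rewrite ?in_shape_west.
  case hv: (v r.+1); rewrite ?orTb ?orFb //; apply/hasPn => k; rewrite mem_iota add0n => /andP[_ hk].
  by apply: (h2 0 k); rewrite ?in_shape_west /= ?hv.
case=> /free_rowP[f1 f2] h; split.
  by move=> hc; apply: f1; move: hc; rewrite ncols_rcons addn1.
move=> [|j] k; rewrite in_shape_west; last by case: k => [|k] //=; apply: f2.
move=> _ hv hk; move: h; rewrite (negbTE (hv : ~~ v r.+1)) orFb => /hasPn h.
by apply: h; rewrite mem_iota.
Qed.

Definition nfree w g := count (free_rowb w g) (iota 0 (size w)).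

Lemma nfree_west w g v : nfree (rcons w false) (add_column g v) =
  v 0 + count (fun r => free_rowb w g r && (v r.+1 || ~~ has v (iota 0 r.+1)))
              (iota 0 (size w)).
Proof.
rewrite /nfree size_rcons /= free_row_west_top -(addn0 1) iotaDl count_map.
congr (_ + _); apply: eq_in_count => r; rewrite mem_iota add0n => /andP[_ hr] /=.
by rewrite add1n free_row_west_shift.
Qed.

(* A south step adds one free row (the new bottom row, which is empty). *)
Lemma nfree_south w g : nfree (rcons w true) g = (nfree w g).+1.
Proof.
rewrite /nfree size_rcons -addn1 iotaD count_cat /= addn0 add0n.
have E : free_rowb (rcons w true) g =1 free_rowb w g.
  move=> r; rewrite /free_rowb ncols_rcons addn0; congr (_ && _).
  by apply: eq_all => j; rewrite in_shape_south.
have F : free_rowb w g (size w).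
  apply/free_rowP; split; first by rewrite ltnNge ncols_le_size.
  by move=> j k /in_shape_row; rewrite ltnn.
by rewrite E (eq_count E) F addn1.
Qed.

Definition fill n (f : {ffun 'I_n * 'I_n -> bool}) (r j : nat) : bool :=
  match (insub r : option 'I_n), (insub j : option 'I_n) with
  | Some r', Some j' => f (r', j')
  | _, _ => false
  end.

Definition ffun_of n (h : nat -> nat -> bool) : {ffun 'I_n * 'I_n -> bool} :=
  [ffun p => h (val p.1) (val p.2)].

Lemma fillE n (f : {ffun 'I_n * 'I_n -> bool}) (r j : 'I_n) : fill f r j = f (r, j).
Proof. by rewrite /fill !valK. Qed.

Lemma fill_ord n (f : {ffun 'I_n * 'I_n -> bool}) r j (hr : r < n) (hj : j < n) :
  fill f r j = f (Ordinal hr, Ordinal hj).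
Proof. by rewrite -fillE. Qed.

Lemma fill_bound n (f : {ffun 'I_n * 'I_n -> bool}) r j : fill f r j -> r < n /\ j < n.
Proof. by rewrite /fill; case: insubP => [r' hr _|//]; case: insubP. Qed.

Lemma fill_out n (f : {ffun 'I_n * 'I_n -> bool}) r j :
  (n <= r) || (n <= j) -> fill f r j = false.
Proof. by move=> h; apply/negP => /fill_bound [h1 h2]; move: h; rewrite leqNgt h1 leqNgt h2. Qed.

Lemma fill_ffun_of n (h : nat -> nat -> bool) :
  (forall r j, h r j -> r < n /\ j < n) -> fill (ffun_of n h) = h.
Proof.
move=> hb; apply: functional_extensionality => r; apply: functional_extensionality => j.
case: (ltnP r n) => hr; last first.
  by rewrite fill_out ?hr //; apply/esym/negP => /hb []; rewrite ltnNge hr.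
case: (ltnP j n) => hj; last first.
  by rewrite fill_out ?hj ?orbT //; apply/esym/negP => /hb [_]; rewrite ltnNge hj.
by rewrite (fill_ord _ hr hj) ffunE.
Qed.

Lemma ffun_of_fill n (f : {ffun 'I_n * 'I_n -> bool}) : ffun_of n (fill f) = f.
Proof. by apply/ffunP => [[r j]]; rewrite ffunE fillE. Qed.

Lemma typeB_fill_of_typeB n (t : tableau n) :
  is_typeB t -> typeB_fill (val t.1) (fill t.2).
Proof.
case: t => [[w hw] f] /=; have hsz : size w = n by apply/eqP.
case/and4P => /forallP H0 /forallP H1 /forallP H2 /forallP H3; split.
- move=> r j /[dup] /fill_bound [hr hj]; rewrite (fill_ord _ hr hj).
  by move: (forallP (H0 (Ordinal hr)) (Ordinal hj)) => /implyP.
- move=> j hj; have hjn : j < n by rewrite -hsz (leq_trans hj (ncols_le_size w)).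
  have := H1 (Ordinal hjn); rewrite /= hj => /existsP [r hr].
  by exists r; rewrite -[j]/(val (Ordinal hjn)) fillE.
- move=> r j r' j' hs hg hr' hg' hj' hgj'.
  have hr : r < n by rewrite -hsz; apply: in_shape_row hs.
  have hj : j < n by rewrite -hsz (leq_trans (in_shape_col hs) (ncols_le_size w)).
  have hrn := ltn_trans hr' hr; have hjn := ltn_trans hj' hj.
  move: hg hg' hgj'; rewrite (fill_ord _ hr hj) (fill_ord _ hrn hj) (fill_ord _ hr hjn).
  move=> hg hg' hgj'; have := forallP (H2 (Ordinal hr)) (Ordinal hj).
  rewrite /= hs hg /=; case/nandP => /existsP; apply.
    by exists (Ordinal hrn); rewrite hr' hg'.
  by exists (Ordinal hjn); rewrite hj' hgj'.
- move=> r j hr hg; have hrn : r < n by rewrite -hsz (leq_trans hr (ncols_le_size w)).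
  case: (ltnP j n) => hj; last by rewrite fill_out // hj orbT.
  move: hg; rewrite (fill_ord _ hrn hrn) (fill_ord _ hrn hj) => hg.
  by have := H3 (Ordinal hrn); rewrite /= hr hg /= => /forallP; apply.
Qed.

Lemma typeB_of_typeB_fill n (t : tableau n) :
  typeB_fill (val t.1) (fill t.2) -> is_typeB t.
Proof.
case: t => [[w hw] f] /= [H0 H1 H2 H3]; apply/and4P; split.
- apply/forallP => r; apply/forallP => j; apply/implyP => h.
  by apply: H0; rewrite fillE.
- apply/forallP => j; apply/implyP => hj; case: (H1 j hj) => r /[dup] /fill_bound [hr _].
  by rewrite -[r]/(val (Ordinal hr)) fillE => h; apply/existsP; exists (Ordinal hr).
- apply/forallP => r; apply/forallP => j; apply/implyP => /andP [hs hg].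
  apply/nandP; case E1: [exists r' : 'I_n, (r' < r) && f (r', j)]; last by left.
  right; apply/negP => /existsP [j' /andP [hj' hgj']].
  case/existsP: E1 => r' /andP [hr' hg'].
  by apply: (H2 r j r' j'); rewrite ?fillE.
- apply/forallP => r; apply/implyP => /andP [hr hg]; apply/forallP => j.
  by have := H3 r j hr; rewrite !fillE; apply.
Qed.

Lemma typeB_fillP n (t : tableau n) : is_typeB t <-> typeB_fill (val t.1) (fill t.2).
Proof. by split; [apply: typeB_fill_of_typeB | apply: typeB_of_typeB_fill]. Qed.

Lemma all2_implyP (v phi : seq bool) : size v = size phi ->
  reflect (forall r, nth false v r -> nth false phi r) (all2 implb v phi).
Proof.
elim: v phi => [|b v IH] [|a phi] //= hs.
- by apply: ReflectT => r; rewrite nth_nil.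
- case: hs => hs; apply: (iffP andP).
    by case=> /implyP h1 /(IH _ hs) h2 [|r] /=; [exact: h1|exact: h2].
  move=> h; split; first by apply/implyP; apply: (h 0).
  by apply/(IH _ hs) => r; apply: (h r.+1).
Qed.

Section LastStep.
Variable n : nat.

Definition free_pattern (t : tableau n) : seq bool :=
  [seq free_rowb (val t.1) (fill t.2) r | r <- iota 0 n].

(* A tableau of size n+1 is a tableau t of size n extended by a datum
   x = (a, v): a is the last boundary step (true = south) and, for a west
   step, v is the new leftmost column.  For a south step v is a dummy (zero);
   for a west step v must contain a 1, and its 1's below the top may only
   sit in rows that are free in t. *)
Definition admissible (t : tableau n) (x : bool * n.+1.-tuple bool) : bool :=
  if x.1 then val x.2 == nseq n.+1 false
  else has id x.2 && all2 implb (behead x.2) (free_pattern t).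

Definition extend (t : tableau n) (x : bool * n.+1.-tuple bool) : tableau n.+1 :=
  ([tuple of rcons t.1 x.1],
   ffun_of n.+1 (if x.1 then fill t.2 else add_column (fill t.2) (nth false x.2))).

Definition last_step (s : n.+1.-tuple bool) : bool := last (thead s) (behead s).

Definition init_steps (s : n.+1.-tuple bool) : n.-tuple bool :=
  [tuple of belast (thead s) (behead s)].

Definition restrict (t : tableau n.+1) : tableau n :=
  (init_steps t.1,
   ffun_of n (if last_step t.1 then fill t.2 else fun r j => fill t.2 r.+1 j.+1)).

Definition column (h : nat -> bool) : n.+1.-tuple bool :=
  [tuple of map h (iota 0 n.+1)].

Definition datum (t : tableau n.+1) : bool * n.+1.-tuple bool :=
  (last_step t.1,
   if last_step t.1 then [tuple of nseq n.+1 false] else column (fun i => fill t.2 i 0)).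

Lemma steps_split (s : n.+1.-tuple bool) : val s = rcons (init_steps s) (last_step s).
Proof. by rewrite /init_steps /last_step /= -lastI; case: s => [[|x s] hs]. Qed.

Lemma last_step_rcons (w : n.-tuple bool) a : last_step [tuple of rcons w a] = a.
Proof. by rewrite /last_step; case: w => [[|x s] hs] //=; rewrite last_rcons. Qed.

Lemma init_steps_rcons (w : n.-tuple bool) a : init_steps [tuple of rcons w a] = w.
Proof.
apply: val_inj; have := steps_split [tuple of rcons w a].
by rewrite last_step_rcons /= => /rcons_inj [].
Qed.

Lemma nth_column h r : nth false (column h) r = if r < n.+1 then h r else false.
Proof.
case: ifP => hr; first by rewrite (nth_map 0) ?size_iota // nth_iota.
by rewrite nth_default // size_map size_iota leqNgt hr.
Qed.

Lemma nth_free_pattern t r : r < n -> nth false (free_pattern t) r = free_rowb (val t.1) (fill t.2) r.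
Proof. by move=> hr; rewrite (nth_map 0) ?size_iota // nth_iota. Qed.

Lemma size_free_pattern t : size (free_pattern t) = n.
Proof. by rewrite size_map size_iota. Qed.

Lemma fill_extend_south (t : tableau n) : fill (ffun_of n.+1 (fill t.2)) = fill t.2.
Proof. by apply: fill_ffun_of => r j /fill_bound [h1 h2]; split; apply: ltnW. Qed.

Lemma fill_extend_west (t : tableau n) (v : n.+1.-tuple bool) :
  fill (ffun_of n.+1 (add_column (fill t.2) (nth false v))) = add_column (fill t.2) (nth false v).
Proof.
apply: fill_ffun_of => r [|j] /=.
  move=> h; split => //; case: (ltnP r n.+1) => // hr.
  by move: h; rewrite nth_default // size_tuple.
by case: r => [|r] // /fill_bound [h1 h2].
Qed.

Lemma restrict_extend t x : restrict (extend t x) = t.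
Proof.
case: t => [w f]; case: x => [a v]; rewrite /restrict /extend /= last_step_rcons init_steps_rcons.
case: a; first by rewrite (fill_extend_south (w, f)) ffun_of_fill.
by rewrite (fill_extend_west (w, f)) /= ffun_of_fill.
Qed.

Lemma datum_extend t x : admissible t x -> datum (extend t x) = x.
Proof.
case: t => [w f]; case: x => [a v]; rewrite /admissible /datum /extend /= last_step_rcons.
case: a => /= [/eqP h|_]; congr (_, _); apply: val_inj; first by rewrite /= h.
by rewrite (fill_extend_west (w, f)) /= -[in RHS](mkseq_nth false v) size_tuple.
Qed.

Lemma fill_bound_south (w : seq bool) g : size w = n -> typeB_fill (rcons w true) g ->
  forall r j, g r j -> r < n /\ j < n.
Proof.
move=> hsz [H0 _ _ _] r j /H0; rewrite in_shape_south => hs; split.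
  by rewrite -hsz; apply: in_shape_row hs.
by rewrite -hsz (leq_trans (in_shape_col hs) (ncols_le_size w)).
Qed.

Lemma fill_bound_west (w : seq bool) g : size w = n -> typeB_fill (rcons w false) g ->
  forall r j, g r.+1 j.+1 -> r < n /\ j < n.
Proof.
move=> hsz [H0 _ _ _] r j /H0; rewrite in_shape_west => hs; split.
  by rewrite -hsz; apply: in_shape_row hs.
by rewrite -hsz (leq_trans (in_shape_col hs) (ncols_le_size w)).
Qed.

Lemma add_column_split (w : seq bool) (f : {ffun 'I_n.+1 * 'I_n.+1 -> bool}) :
  size w = n -> typeB_fill (rcons w false) (fill f) ->
  add_column (fill (ffun_of n (fun r j => fill f r.+1 j.+1)))
             (nth false (column (fun i => fill f i 0))) = fill f.
Proof.
move=> hsz hv; rewrite fill_ffun_of; last exact: fill_bound_west hv.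
apply: functional_extensionality => r; apply: functional_extensionality => [[|j]].
  change (nth false (column (fun i => fill f i 0)) r = fill f r 0).
  rewrite nth_column; case: ifP => // /negbT; rewrite -leqNgt => hr.
  by rewrite fill_out ?hr.
case: r => [|r] //=; apply/esym/negP; case: hv => H0 _ _ _ /H0.
by rewrite in_shape_west.
Qed.

Lemma extend_restrict (t : tableau n.+1) : is_typeB t -> extend (restrict t) (datum t) = t.
Proof.
case: t => [s f] /typeB_fillP /=; rewrite steps_split.
have hsz : size (init_steps s) = n by rewrite size_tuple.
rewrite /extend /restrict /datum; case E: (last_step s) => hv;
  (congr (_, _); first by apply: val_inj; rewrite [in RHS]steps_split E).
  by rewrite fill_ffun_of ?ffun_of_fill //; apply: fill_bound_south hv.
by rewrite (add_column_split hsz hv) ffun_of_fill.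
Qed.

Lemma restrict_typeB (t : tableau n.+1) : is_typeB t ->
  is_typeB (restrict t) /\ admissible (restrict t) (datum t).
Proof.
case: t => [s f] /typeB_fillP /=; rewrite steps_split.
have hsz : size (init_steps s) = n by rewrite size_tuple.
rewrite /admissible /restrict /datum; case E: (last_step s) => hv.
  split; last by rewrite /= eqxx.
  apply/typeB_fillP; rewrite /= fill_ffun_of; last exact: fill_bound_south hv.
  by move/typeB_fill_south: hv.
have hv' := hv; rewrite -(add_column_split hsz hv) in hv'; case/typeB_fill_west: hv'.
  by move=> r; rewrite nth_column; case: ifP => // hr _; rewrite size_tuple -ltnS.
move=> V [r0 hr0] F; split; first exact: typeB_of_typeB_fill.
rewrite [(false, _).1]/= [(false, _).2]/=; apply/andP; split.
  apply/(has_nthP false); exists r0 => //; move: hr0; rewrite nth_column size_tuple.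
  by case: ifP.
apply/all2_implyP; first by rewrite size_behead size_tuple size_free_pattern.
move=> r; rewrite nth_behead nth_column => h.
have hr : r < n by move: h; case: ifP.
by rewrite nth_free_pattern //; apply/free_rowP; apply: F; rewrite nth_column.
Qed.

Lemma extend_typeB (t : tableau n) x : is_typeB t -> admissible t x -> is_typeB (extend t x).
Proof.
case: t => [w f]; case: x => [a v] /typeB_fillP /= hv; rewrite /admissible /=.
have hsz : size w = n by rewrite size_tuple.
move=> hx; apply/typeB_fillP; rewrite /extend; case: a hx => /= hx.
  by rewrite (fill_extend_south (w, f)); apply/typeB_fill_south.
rewrite (fill_extend_west (w, f)) /=; apply/typeB_fill_west.
  move=> r h; case: (ltnP r n.+1) => hr; first by rewrite hsz -ltnS.
  by move: h; rewrite nth_default // size_tuple.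
have hsb : size (behead v) = size (free_pattern (w, f)).
  by rewrite size_behead size_tuple size_free_pattern.
case/andP: hx => /(has_nthP false) [r0 _ h0] /(all2_implyP hsb) hal; split => //.
  by exists r0.
move=> r hr; have := hal r; rewrite nth_behead => /(_ hr).
have hrn : r < n.
  by case: (ltnP r n) => // hrn; move: hr; rewrite nth_default // size_tuple.
by rewrite nth_free_pattern // => /free_rowP.
Qed.

End LastStep.

(* For the old free rows phi and the
   new column below the top v, free_after phi v s counts the rows that stay
   free, where s records whether the new column already has a 1 higher up. *)
Fixpoint free_after (phi v : seq bool) (s : bool) : nat :=
  match phi, v with
  | a :: phi', b :: v' => (a && (b || ~~ s)) + free_after phi' v' (s || b)
  | _, _ => 0
  end.

Lemma free_afterE phi v s : size v = size phi ->
  free_after phi v s = count (fun r => nth false phi r &&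
     (nth false v r || ~~ (s || has (nth false v) (iota 0 r)))) (iota 0 (size phi)).
Proof.
elim: phi v s => [|a phi IH] [|b v] s //= [hs].
rewrite orbF (IH v (s || b) hs) -(addn0 1) iotaDl count_map; congr (_ + _).
apply: eq_count => r /=; rewrite add0n -[1]/(1+0) iotaDl has_map orbA.
by congr (_ && (_ || ~~ (_ || _))); apply: eq_has => k /=; rewrite add1n.
Qed.

Definition nfree_tab n (t : tableau n) : nat := nfree (val t.1) (fill t.2).

Lemma nfree_tab_pattern n (t : tableau n) : nfree_tab t = count id (free_pattern t).
Proof. by rewrite /nfree_tab /nfree /free_pattern count_map size_tuple. Qed.

Lemma nfree_extend_south n (t : tableau n) v : nfree_tab (extend t (true, v)) = (nfree_tab t).+1.
Proof. by rewrite /nfree_tab /extend /= (fill_extend_south t) nfree_south. Qed.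

Lemma nfree_extend_west n (t : tableau n) b (v : n.-tuple bool) :
  nfree_tab (extend t (false, [tuple of b :: v])) = b + free_after (free_pattern t) v b.
Proof.
case: t => [w f]; rewrite /nfree_tab /extend [(false, _).1]/= [(false, _).2]/=.
rewrite (fill_extend_west (w, f)) nfree_west free_afterE ?size_free_pattern ?size_tuple //.
rewrite /= size_tuple; congr (_ + _).
apply: eq_in_count => r; rewrite mem_iota add0n => hr /=.
rewrite nth_free_pattern // -[1]/(1+0) iotaDl has_map.
by congr (_ && (_ || ~~ (_ || _))); apply: eq_has.
Qed.

Local Open Scope ring_scope.

(* B_(n+1) is in bijection with the pairs (t, x), t in B_n, x admissible. *)
Lemma sum_typeB_succ (R : nmodType) n (G : tableau n.+1 -> R) :
  \sum_(t in typeB_tableaux n.+1) G t =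
  \sum_(t in typeB_tableaux n) \sum_(x | admissible t x) G (extend t x).
Proof.
rewrite (partition_big (@restrict n) (mem (typeB_tableaux n))) /=; last first.
  by move=> t'; rewrite !inE => /restrict_typeB [].
apply: eq_bigr => t ht.
rewrite (reindex_onto (extend t) (@datum n)) /=; last first.
  by move=> t' /andP [ht' /eqP <-]; apply: extend_restrict; move: ht'; rewrite inE.
apply: eq_bigl => x; apply/idP/idP.
  case/andP => /andP [h1 /eqP h2] /eqP h3.
  by move: h1; rewrite inE => /restrict_typeB; rewrite h2 h3 => -[].
move=> hx; rewrite inE extend_typeB ?restrict_extend ?datum_extend ?eqxx //.
by move: ht; rewrite inE.
Qed.

Lemma sum_tuple_cons (R : nmodType) m (P : pred (m.+1.-tuple bool)) (F : m.+1.-tuple bool -> R) :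
  \sum_(v | P v) F v =
  \sum_(b : bool) \sum_(v : m.-tuple bool | P [tuple of b :: v]) F [tuple of b :: v].
Proof.
rewrite pair_big_dep /=.
rewrite (reindex (fun p : bool * m.-tuple bool => [tuple of p.1 :: p.2])) //=.
exists (fun v => (thead v, [tuple of behead v])).
  by move=> [b v] _ /=; congr (_, _); apply: val_inj.
by move=> v _; rewrite [RHS]tuple_eta; apply: val_inj.
Qed.

(* The weight y^(free rows) summed over the admissible new columns: with
   u = count id phi old free rows, and s telling whether a 1 already lies
   above, the new column contributes (1+y)^u if s, and y((1+y)^u - y^u)
   otherwise (then it must still receive a 1). *)
Lemma sum_free_after (R : comPzRingType) (y : R) m : forall (phi : seq bool) s,
  size phi = m ->
  \sum_(v : m.-tuple bool | all2 implb v phi && (s || has id v)) y ^+ free_after phi v s =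
  if s then (1 + y) ^+ count id phi
  else y * ((1 + y) ^+ count id phi - y ^+ count id phi).
Proof.
elim: m => [|m IH] [|a phi] s // => [_|/succn_inj hs].
  rewrite big_mkcond (big_pred1 [tuple]) => [|v]; last by rewrite [v]tuple0; apply/esym/eqP.
  by case: s; rewrite /= ?subrr ?mulr0 ?expr0.
have headE b : \sum_(v : m.-tuple bool | all2 implb [tuple of b :: v] (a :: phi) &&
                                        (s || has id [tuple of b :: v]))
                 y ^+ free_after (a :: phi) [tuple of b :: v] s =
    (if b ==> a then y ^+ (a && (b || ~~ s)) else 0) *
    \sum_(v : m.-tuple bool | all2 implb v phi && ((s || b) || has id v))
      y ^+ free_after phi v (s || b).
  rewrite big_distrr /= [RHS]big_mkcond [LHS]big_mkcond; apply: eq_bigr => v _ /=.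
  rewrite orbA -andbA; case: (b ==> a); case: (all2 implb v phi && _);
  by rewrite /= ?mul0r ?exprD.
rewrite sum_tuple_cons big_bool !headE !IH // {headE IH}.
by case: a; case: s; rewrite /= ?add0n ?add1n ?expr0 ?expr1 ?mul1r ?mul0r ?add0r ?addr0 // !exprS; ring.
Qed.

Lemma sum_extend_west (R : comPzRingType) (y : R) n (t : tableau n) :
  \sum_(v | admissible t (false, v)) y ^+ nfree_tab (extend t (false, v)) =
  2 * y * (1 + y) ^+ nfree_tab t - y ^+ (nfree_tab t).+1.
Proof.
rewrite sum_tuple_cons big_bool /=.
have colE b : \sum_(v : n.-tuple bool | (b || has id v) && all2 implb v (free_pattern t))
    y ^+ nfree_tab (extend t (false, [tuple of b :: v])) =
  y ^+ b * \sum_(v : n.-tuple bool | all2 implb v (free_pattern t) && (b || has id v))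
    y ^+ free_after (free_pattern t) v b.
  rewrite big_distrr; apply: eq_big => [v|v _]; first by rewrite andbC.
  by rewrite nfree_extend_west exprD.
rewrite !colE !sum_free_after ?size_free_pattern // -nfree_tab_pattern exprS.
by rewrite expr1 expr0; ring.
Qed.

Lemma sum_extensions (R : comPzRingType) (K : bool -> R) (y : R) n (t : tableau n) :
  \sum_(x | admissible t x) K x.1 * y ^+ nfree_tab (extend t x) =
  K true * y ^+ (nfree_tab t).+1 +
  K false * (2 * y * (1 + y) ^+ nfree_tab t - y ^+ (nfree_tab t).+1).
Proof.
have -> : \sum_(x | admissible t x) K x.1 * y ^+ nfree_tab (extend t x) =
    \sum_(a : bool) \sum_(v | admissible t (a, v)) K a * y ^+ nfree_tab (extend t (a, v)).
  by rewrite pair_big_dep; apply: eq_big => [[a v]|[a v] _].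
rewrite big_bool -sum_extend_west big_distrr; congr (_ + _).
by rewrite (big_pred1 [tuple of nseq n.+1 false]) ?nfree_extend_south.
Qed.

Definition tab_gf (R : comPzRingType) n (y : R) : R :=
  \sum_(t in typeB_tableaux n) y ^+ nfree_tab t.

Definition rows_gf (R : comPzRingType) n (y : R) : R :=
  \sum_(t in typeB_tableaux n) (nrows (val t.1))%:R * y ^+ nfree_tab t.

Lemma nrows_extend n (t : tableau n) x : nrows (val (extend t x).1) = (nrows (val t.1) + x.1)%N.
Proof. by rewrite /extend /= nrows_rcons. Qed.

Lemma tab_gf_succ (R : comPzRingType) n (y : R) : tab_gf n.+1 y = 2 * y * tab_gf n (1 + y).
Proof.
rewrite /tab_gf sum_typeB_succ big_distrr; apply: eq_bigr => t _.
have := sum_extensions (fun=> 1) y t; rewrite /=.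
under eq_bigr do rewrite mul1r.
by move=> ->; ring.
Qed.

Lemma rows_gf_succ (R : comPzRingType) n (y : R) :
  rows_gf n.+1 y = 2 * y * rows_gf n (1 + y) + y * tab_gf n y.
Proof.
rewrite /rows_gf /tab_gf sum_typeB_succ !big_distrr -big_split; apply: eq_bigr => t _.
under eq_bigr do rewrite nrows_extend natrD.
rewrite (sum_extensions (fun a => (nrows (val t.1))%:R + a%:R)) exprS /=; ring.
Qed.

Definition empty_tableau : tableau 0 := ([tuple], [ffun => false]).

Lemma typeB_tableaux0 : typeB_tableaux 0 = [set empty_tableau].
Proof.
apply/setP => -[w f]; rewrite !inE.
have -> : (w, f) = empty_tableau.
  congr (_, _); first by rewrite (tuple0 w).
  by apply/ffunP => -[[]].
by rewrite eqxx; apply/and4P; split; apply/forallP => -[].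
Qed.

Lemma tab_gf0 (R : comPzRingType) (y : R) : tab_gf 0 y = 1.
Proof. by rewrite /tab_gf typeB_tableaux0 big_set1. Qed.

Lemma rows_gf0 (R : comPzRingType) (y : R) : rows_gf 0 y = 0.
Proof. by rewrite /rows_gf typeB_tableaux0 big_set1 mul0r. Qed.

Lemma tab_gf_gt0 (R : numDomainType) n (y : R) : 0 < y -> 0 < tab_gf n y.
Proof.
elim: n y => [|n IH] y hy; first by rewrite tab_gf0.
by rewrite tab_gf_succ !mulr_gt0 // IH // addr_gt0.
Qed.

Lemma tab_gf_shift (R : comPzRingType) n (y : R) :
  (y + n%:R) * tab_gf n y = y * tab_gf n (1 + y).
Proof.
elim: n y => [|n IH] y; first by rewrite !tab_gf0 addr0.
rewrite !tab_gf_succ -[n.+1]addn1 natrD.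
rewrite [RHS](_ : _ = 2 * y * ((1 + y) * tab_gf n (1 + (1 + y)))); last by ring.
rewrite -IH; ring.
Qed.

Lemma rows_gf_identity (R : comPzRingType) n (y : R) :
  4 * (y + n%:R - 1) * rows_gf n y = n%:R * (2 * y + n%:R - 1) * tab_gf n y.
Proof.
elim: n y => [|n IH] y; first by rewrite rows_gf0 tab_gf0; ring.
rewrite rows_gf_succ tab_gf_succ -[n.+1]addn1 natrD.
have IH1 := IH (1 + y); have Sh := tab_gf_shift n y.
have -> : 4 * (y + (n%:R + 1%:R) - 1) * (2 * y * rows_gf n (1 + y) + y * tab_gf n y) =
   2 * y * (4 * (1 + y + n%:R - 1) * rows_gf n (1 + y)) + 4 * y * ((y + n%:R) * tab_gf n y)
  by ring.
rewrite IH1 Sh; ring.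
Qed.

Theorem mainTheorem4 (n : nat) : (0 < n)%N ->
  expected_rows n = (n.+1)%:R / 4%:R.
Proof.
move=> n_gt0.
have rowsE : \sum_(t in typeB_tableaux n) (nrows (val t.1))%:R = rows_gf n (1 : rat).
  by apply: eq_bigr => t _; rewrite expr1n mulr1.
have cardE : (#|typeB_tableaux n|)%:R = tab_gf n (1 : rat).
  by rewrite /tab_gf (eq_bigr (fun=> 1)) ?sumr_const // => t _; rewrite expr1n.
have F_neq0 : tab_gf n (1 : rat) != 0 by rewrite lt0r_neq0 // tab_gf_gt0.
have n_neq0 : n%:R != 0 :> rat by rewrite pnatr_eq0 -lt0n.
(* At y = 1 the identity reads 4 n D = n (n+1) F. *)
have key : 4 * rows_gf n (1 : rat) = n.+1%:R * tab_gf n 1.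
  apply: (mulfI n_neq0); rewrite -addn1 natrD.
  transitivity (4 * (1 + n%:R - 1) * rows_gf n (1 : rat)); first by ring.
  by rewrite rows_gf_identity; ring.
rewrite /expected_rows rowsE cardE; apply/eqP.
by rewrite eqr_div ?pnatr_eq0 // mulrC key.
Qed.
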